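(* There are infinitely many golden ellipses in the unit disc $\mathbb{D}$ which are Blaschke $3$-ellipses.
   Context: The golden ratio is $\alpha=\frac{1+\sqrt5}{2}$. A golden ellipse is an ellipse for which the ratio of the length of the major axis to the length of the minor axis equals $\alpha$. For a Blaschke product of degree three of the form $B(z)=z\frac{(z-a_1)(z-a_2)}{(1-\overline{a_1}z)(1-\overline{a_2}z)}$ with $|a_1|,|a_2|<1$ and distinct zeros $0,a_1,a_2$, the associated Blaschke $3$-ellipse is the ellipse $E=\{z: |z-a_1|+|z-a_2|=|1-\overline{a_1}a_2|\}$ (with foci $a_1,a_2$); a Blaschke ellipse means an ellipse arising this way from some such $B$. *)

From Stdlib Require Import Reals List.
From Coquelicot Require Import Coquelicot.
Open Scope R_scope.

Definition golden_ratio : R := (1 + sqrt 5) / 2.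

Definition in_unit_disc (z : C) : Prop := Cmod z < 1.

Definition is_ellipse_axes (S : C -> Prop) (a b : R) : Prop :=
  0 < b /\ b <= a /\
  exists (c : C) (th : R),
    forall z : C, S z <->
      exists t : R, z = Cplus c (Cmult (cos th, sin th) (a * cos t, b * sin t)).

Definition golden_ellipse (S : C -> Prop) : Prop :=
  exists a b : R, is_ellipse_axes S a b /\ (2 * a) / (2 * b) = golden_ratio.

(** Blaschke 3-ellipse of B(z) = z (z-a1)(z-a2)/((1- conj a1 z)(1 - conj a2 z)),
    with |a1|,|a2| < 1 and 0, a1, a2 distinct. *)
Definition blaschke_3_ellipse (a1 a2 : C) : C -> Prop :=
  fun z => Cmod (Cminus z a1) + Cmod (Cminus z a2)
           = Cmod (Cminus 1 (Cmult (Cconj a1) a2)).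

Definition is_blaschke_ellipse (S : C -> Prop) : Prop :=
  exists a1 a2 : C,
    in_unit_disc a1 /\ in_unit_disc a2 /\
    a1 <> 0 /\ a2 <> 0 /\ a1 <> a2 /\
    S = blaschke_3_ellipse a1 a2.

Definition infinite_family (P : (C -> Prop) -> Prop) : Prop :=
  ~ exists l : list (C -> Prop), forall S, P S -> In S l.

From Stdlib Require Import Reals List FinFun Lra Lia Psatz.
From Coquelicot Require Import Coquelicot.
Open Scope R_scope.

(* For 0 < c < 1 and an angle th, take the foci a = c e^(i th) and -a.  Then
   |1 - conj(a) (-a)| = 1 + c^2, so the Blaschke 3-ellipse is the ellipse with
   foci at distance c from the origin and major semi-axis (1 + c^2)/2; its minor
   semi-axis is therefore (1 - c^2)/2, and it lies in the disc because
   (1 + c^2)/2 < 1.  For c^2 = sqrt 5 - 2 the axis ratio is golden, and the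
   ellipses for distinct angles in [0, pi/2) are distinct since their vertices
   (the points of maximal modulus) differ. *)

Definition cis (th : R) : C := (cos th, sin th).

Definition ellipse_point (A B t : R) : C := (A * cos t, B * sin t).

Lemma cos_sin_sq (t : R) : cos t ^ 2 + sin t ^ 2 = 1.
Proof. rewrite <- (sin2_cos2 t); unfold Rsqr; ring. Qed.

Lemma unit_circle_cos_sin (x y : R) :
  x ^ 2 + y ^ 2 = 1 -> exists t, cos t = x /\ sin t = y.
Proof.
  intro H.
  assert (Hx : -1 <= x <= 1) by nra.
  assert (Hs : sqrt (1 - x²) = Rabs y).
  { rewrite <- sqrt_Rsqr_abs. f_equal. unfold Rsqr. nra. }
  destruct (Rle_dec 0 y) as [Hy | Hy].
  - exists (acos x). split; [now apply cos_acos |].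
    rewrite sin_acos, Hs by assumption. now apply Rabs_pos_eq.
  - exists (- acos x). rewrite cos_neg, sin_neg, sin_acos, Hs, cos_acos by assumption.
    rewrite Rabs_left by lra. split; ring.
Qed.

Lemma Cmod_cis (th : R) : Cmod (cis th) = 1.
Proof. unfold Cmod, cis; cbn [fst snd]. rewrite cos_sin_sq. apply sqrt_1. Qed.

Lemma cis_mul_opp (th : R) : (cis th * cis (- th))%C = 1.
Proof.
  unfold cis, Cmult; simpl. rewrite cos_neg, sin_neg.
  apply injective_projections; simpl; [rewrite <- (cos_sin_sq th) |]; ring.
Qed.

Lemma Cmod_scale_cis (c th : R) : 0 <= c -> Cmod (c * cis th)%C = c.
Proof. intro Hc. rewrite Cmod_mult, Cmod_cis, Cmod_R, Rabs_pos_eq by exact Hc. ring. Qed.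

Section FocalProperty.

Variables c A B : R.
Hypotheses (Hc : 0 < c) (HcA : c < A) (HB : 0 < B) (HB2 : B ^ 2 = A ^ 2 - c ^ 2).

Lemma focal_distance (s t : R) :
  s ^ 2 = c ^ 2 -> Cmod (ellipse_point A B t - s)%C = A - s * cos t.
Proof.
  intro Hs. pose proof (cos_sin_sq t) as Ht. pose proof (COS_bound t).
  unfold Cmod, ellipse_point, Cminus, Cplus, Copp, RtoC; cbn [fst snd].
  rewrite <- (sqrt_pow2 (A - s * cos t)) by nra. f_equal. nra.
Qed.

Lemma focal_sum_ellipse_point (t : R) :
  Cmod (ellipse_point A B t - c)%C + Cmod (ellipse_point A B t + c)%C = 2 * A.
Proof.
  replace (ellipse_point A B t + c)%C with (ellipse_point A B t - RtoC (- c))%C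
    by (rewrite RtoC_opp; ring).
  rewrite !focal_distance by ring. ring.
Qed.

Lemma focal_sum_eq_ellipse (x y : R) :
  Cmod ((x, y) - c)%C + Cmod ((x, y) + c)%C = 2 * A -> (x / A) ^ 2 + (y / B) ^ 2 = 1.
Proof.
  unfold Cmod, Cminus, Cplus, Copp, RtoC; cbn [fst snd].
  set (r1 := sqrt ((x + - c) ^ 2 + _)). set (r2 := sqrt ((x + c) ^ 2 + _)). intro Hsum.
  assert (R1 : r1 ^ 2 = (x - c) ^ 2 + y ^ 2)
    by (unfold r1; rewrite pow2_sqrt; [ring | apply Rplus_le_le_0_compat; apply pow2_ge_0]).
  assert (R2 : r2 ^ 2 = (x + c) ^ 2 + y ^ 2)
    by (unfold r2; rewrite pow2_sqrt; [ring | apply Rplus_le_le_0_compat; apply pow2_ge_0]).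
  clearbody r1 r2.
  assert (Hdiff : r2 - r1 = 2 * c * x / A).
  { apply (Rmult_eq_reg_r (2 * A)); [| lra].
    rewrite <- Hsum at 1. field_simplify; [| lra]. rewrite R1, R2. ring. }
  assert (Hr1 : r1 = A - c * x / A).
  { replace r1 with (((r1 + r2) - (r2 - r1)) / 2) by field.
    rewrite Hsum, Hdiff. field. lra. }
  assert (HY : y ^ 2 = B ^ 2 - x ^ 2 * B ^ 2 / A ^ 2).
  { replace (y ^ 2) with (r1 ^ 2 - (x - c) ^ 2) by lra.
    rewrite Hr1, HB2. field. lra. }
  replace ((x / A) ^ 2 + (y / B) ^ 2) with (x ^ 2 / A ^ 2 + y ^ 2 / B ^ 2) by (field; lra).
  rewrite HY. field. lra.
Qed.

Lemma focal_sum_iff (w : C) :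
  Cmod (w - c)%C + Cmod (w + c)%C = 2 * A <-> exists t, w = ellipse_point A B t.
Proof.
  split.
  - destruct w as [x y]. intro Hsum.
    destruct (unit_circle_cos_sin _ _ (focal_sum_eq_ellipse x y Hsum)) as [t [Ct St]].
    exists t. unfold ellipse_point. rewrite Ct, St. f_equal; field; lra.
  - intros [t ->]. apply focal_sum_ellipse_point.
Qed.

Lemma rotated_focal_sum_iff (th : R) (z : C) :
  Cmod (z - c * cis th)%C + Cmod (z + c * cis th)%C = 2 * A <->
  exists t, z = (cis th * ellipse_point A B t)%C.
Proof.
  set (w := (cis (- th) * z)%C).
  assert (Hz : z = (cis th * w)%C) by (unfold w; rewrite Cmult_assoc, cis_mul_opp; ring).
  clearbody w. subst z.
  replace (cis th * w - c * cis th)%C with (cis th * (w - c))%C by ring.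
  replace (cis th * w + c * cis th)%C with (cis th * (w + c))%C by ring.
  rewrite !Cmod_mult, Cmod_cis, !Rmult_1_l, focal_sum_iff.
  split; intros [t Ht]; exists t.
  - now rewrite Ht.
  - assert (Hl : forall u, (cis (- th) * (cis th * u))%C = u)
      by (intro u; rewrite Cmult_assoc, (Cmult_comm (cis (- th))), cis_mul_opp; ring).
    now rewrite <- (Hl w), Ht, Hl.
Qed.

End FocalProperty.

Lemma Cmod_ellipse_point_sq (A B t : R) :
  Cmod (ellipse_point A B t) ^ 2 = A ^ 2 * cos t ^ 2 + B ^ 2 * sin t ^ 2.
Proof. rewrite Cmod2_alt. unfold ellipse_point; cbn [Re Im fst snd]. ring. Qed.

Lemma Cmod_ellipse_point_le (A B t : R) : 0 <= B <= A -> Cmod (ellipse_point A B t) <= A.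
Proof.
  intro HAB. pose proof (cos_sin_sq t).
  apply Rsqr_incr_0_var; [| lra]. rewrite !Rsqr_pow2, Cmod_ellipse_point_sq.
  assert (0 <= (A ^ 2 - B ^ 2) * sin t ^ 2) by (apply Rmult_le_pos; [nra | apply pow2_ge_0]).
  nra.
Qed.

Lemma Cmod_ellipse_point_eq_major (A B t : R) :
  0 <= B < A -> Cmod (ellipse_point A B t) = A -> sin t = 0.
Proof.
  intros HAB HA. pose proof (cos_sin_sq t).
  assert (Hsq := Cmod_ellipse_point_sq A B t). rewrite HA in Hsq.
  assert (Hs : (A ^ 2 - B ^ 2) * sin t ^ 2 = 0) by nra.
  apply Rmult_integral in Hs as [Hs | Hs]; [nra |].
  apply Rsqr_0_uniq. now rewrite Rsqr_pow2.
Qed.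

Lemma Cmod_one_sub_conj_opp (a : C) : Cmod (1 - Cconj a * - a)%C = 1 + Cmod a ^ 2.
Proof.
  replace (1 - Cconj a * - a)%C with (RtoC (1 + Cmod a ^ 2))
    by (rewrite RtoC_plus, Cmod2_conj; ring).
  rewrite Cmod_R. apply Rabs_pos_eq. pose proof (pow2_ge_0 (Cmod a)). lra.
Qed.

Lemma blaschke_3_ellipse_opp (a z : C) :
  blaschke_3_ellipse a (- a) z <-> Cmod (z - a)%C + Cmod (z + a)%C = 1 + Cmod a ^ 2.
Proof.
  unfold blaschke_3_ellipse. rewrite Cmod_one_sub_conj_opp.
  replace (z - - a)%C with (z + a)%C by ring. reflexivity.
Qed.

Definition centred_blaschke_ellipse (c th : R) : C -> Prop :=
  blaschke_3_ellipse (c * cis th) (- (c * cis th)).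

Section CentredBlaschkeEllipse.

Variable c : R.
Hypothesis Hc : 0 < c < 1.

Lemma centred_blaschke_ellipse_iff (th : R) (z : C) :
  centred_blaschke_ellipse c th z <->
  exists t, z = (cis th * ellipse_point ((1 + c ^ 2) / 2) ((1 - c ^ 2) / 2) t)%C.
Proof.
  unfold centred_blaschke_ellipse.
  rewrite blaschke_3_ellipse_opp, Cmod_scale_cis by lra.
  replace (1 + c ^ 2) with (2 * ((1 + c ^ 2) / 2)) at 1 by field.
  apply rotated_focal_sum_iff; [lra | nra | nra | field].
Qed.

Lemma centred_blaschke_ellipse_axes (th : R) :
  is_ellipse_axes (centred_blaschke_ellipse c th) ((1 + c ^ 2) / 2) ((1 - c ^ 2) / 2).
Proof.
  split; [nra | split; [nra |]].
  exists 0%C, th. intro z. rewrite centred_blaschke_ellipse_iff.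
  setoid_rewrite Cplus_0_l. reflexivity.
Qed.

Lemma centred_blaschke_ellipse_in_unit_disc (th : R) (z : C) :
  centred_blaschke_ellipse c th z -> in_unit_disc z.
Proof.
  rewrite centred_blaschke_ellipse_iff. intros [t ->].
  unfold in_unit_disc. rewrite Cmod_mult, Cmod_cis, Rmult_1_l.
  eapply Rle_lt_trans; [apply Cmod_ellipse_point_le; nra | nra].
Qed.

Lemma centred_blaschke_ellipse_is_blaschke (th : R) :
  is_blaschke_ellipse (centred_blaschke_ellipse c th).
Proof.
  assert (Ha := Cmod_scale_cis c th (Rlt_le _ _ (proj1 Hc))).
  assert (Hna : Cmod (- (c * cis th))%C = c) by now rewrite Cmod_opp.
  assert (Hnz : (c * cis th)%C <> 0) by (intro E; rewrite E, Cmod_0 in Ha; lra).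
  exists (c * cis th)%C, (- (c * cis th))%C. unfold in_unit_disc.
  rewrite Ha, Hna. repeat split; try lra.
  - exact Hnz.
  - intro E. rewrite E, Cmod_0 in Hna. lra.
  - intro E. pose proof (cos_sin_sq th).
    unfold Cmult, Copp, cis, RtoC in E; cbn [fst snd] in E. injection E. nra.
Qed.

Lemma centred_blaschke_ellipse_angle_inj (th th' : R) :
  0 <= th < PI / 2 -> 0 <= th' < PI / 2 ->
  centred_blaschke_ellipse c th = centred_blaschke_ellipse c th' -> th = th'.
Proof.
  intros Hth Hth' E.
  set (A := (1 + c ^ 2) / 2). set (B := (1 - c ^ 2) / 2).
  assert (HA : 0 < A) by (unfold A; nra).
  assert (Hv : ellipse_point A B 0 = RtoC A)
    by (unfold ellipse_point, RtoC; rewrite cos_0, sin_0; f_equal; ring).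
  assert (Hvertex : centred_blaschke_ellipse c th' (cis th' * A)%C)
    by (apply centred_blaschke_ellipse_iff; exists 0; fold A B; now rewrite Hv).
  rewrite <- E, centred_blaschke_ellipse_iff in Hvertex.
  destruct Hvertex as [t Ht]. fold A B in Ht.
  assert (Hs : sin t = 0).
  { apply (Cmod_ellipse_point_eq_major A B t); [unfold A, B; nra |].
    apply (f_equal Cmod) in Ht. rewrite !Cmod_mult, !Cmod_cis, Cmod_R, Rabs_pos_eq in Ht; lra. }
  assert (Hcos : cos t = 1 \/ cos t = -1) by (pose proof (cos_sin_sq t); nra).
  apply (f_equal fst) in Ht. unfold Cmult, cis, ellipse_point, RtoC in Ht. cbn [fst snd] in Ht.
  rewrite Hs in Ht.
  pose proof PI2_1.
  assert (0 < cos th) by (apply cos_gt_0; lra).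
  assert (0 < cos th') by (apply cos_gt_0; lra).
  destruct Hcos as [Hcos | Hcos]; rewrite Hcos in Ht; [| nra].
  apply cos_inj; nra.
Qed.

End CentredBlaschkeEllipse.

(* The ratio of the axes is (1 + c^2) / (1 - c^2), which equals the golden ratio
   exactly when c^2 = (golden_ratio - 1) / (golden_ratio + 1) = sqrt 5 - 2. *)
Definition golden_focus : R := sqrt (sqrt 5 - 2).

Lemma sqrt5_bounds : 2 < sqrt 5 < 3.
Proof.
  pose proof (sqrt_sqrt 5) as H5. pose proof (sqrt_pos 5).
  split; nra.
Qed.

Lemma golden_focus_bounds : 0 < golden_focus < 1.
Proof.
  pose proof sqrt5_bounds. unfold golden_focus. split.
  - apply sqrt_lt_R0. lra.
  - rewrite <- sqrt_1. apply sqrt_lt_1_alt. lra.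
Qed.

Lemma golden_focus_axes_ratio :
  2 * ((1 + golden_focus ^ 2) / 2) / (2 * ((1 - golden_focus ^ 2) / 2)) = golden_ratio.
Proof.
  pose proof sqrt5_bounds. pose proof (sqrt_sqrt 5) as H5.
  unfold golden_focus, golden_ratio. rewrite pow2_sqrt by lra.
  field_simplify_eq; nra.
Qed.

Lemma infinite_family_of_injective (P : (C -> Prop) -> Prop) (f : nat -> C -> Prop) :
  Injective f -> (forall n, P (f n)) -> infinite_family P.
Proof.
  intros Hf HP [l Hl].
  assert (Hlen : (length (map f (seq 0 (S (length l)))) <= length l)%nat).
  { apply NoDup_incl_length.
    - apply Injective_map_NoDup; [exact Hf | apply seq_NoDup].
    - intros S HS. apply in_map_iff in HS as [n [<- _]]. apply Hl, HP. }
  rewrite length_map, length_seq in Hlen. lia.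
Qed.

Lemma inv_INR_S_bounds (n : nat) : 0 <= / INR (S n) < PI / 2.
Proof.
  pose proof PI2_1. pose proof (pos_INR n). rewrite S_INR. split.
  - left. apply Rinv_0_lt_compat. lra.
  - apply Rle_lt_trans with 1; [| lra].
    rewrite <- Rinv_1. apply Rinv_le_contravar; lra.
Qed.

Theorem theorem4 :
  infinite_family (fun S : C -> Prop =>
    golden_ellipse S /\
    (forall z, S z -> in_unit_disc z) /\
    is_blaschke_ellipse S).
Proof.
  pose proof golden_focus_bounds as Hc.
  apply (infinite_family_of_injective _
           (fun n => centred_blaschke_ellipse golden_focus (/ INR (S n)))).
  - intros n m E.
    apply (centred_blaschke_ellipse_angle_inj _ Hc) in E; try apply inv_INR_S_bounds.
    apply Rinv_eq_reg, INR_eq in E. now injection E.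
  - intro n. split; [| split].
    + exists ((1 + golden_focus ^ 2) / 2), ((1 - golden_focus ^ 2) / 2).
      split; [apply centred_blaschke_ellipse_axes, Hc | apply golden_focus_axes_ratio].
    + apply centred_blaschke_ellipse_in_unit_disc, Hc.
    + apply centred_blaschke_ellipse_is_blaschke, Hc.
Qed.
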